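(* Let $\mathbb{K}=(G,M,I)$ be a finite reduced formal context, $\mathcal{A}$ the set of its proper premises, and $BC(\mathcal{A}):=\{A\in\mathcal{A}\mid |A|=1\}$. Then for every $A\in BC(\mathcal{A})$, the set $A^{\bullet}$ computed in $\mathbb{K}$ equals $A^{\bullet}$ computed in $BC(\mathbb{K})$, and both equal $A''\setminus A$. Furthermore, $BC(\mathcal{A})$ is exactly the set of all proper premises of $BC(\mathbb{K})$.
   Context: For a formal context $(G,M,I)$, derivation: $A'=\{m\in M\mid\forall g\in A:(g,m)\in I\}$ for $A\subseteq G$, and $B'=\{g\in G\mid\forall m\in B:(g,m)\in I\}$ for $B\subseteq M$. An object $g$ is irreducible if there is no $X\subseteq G$ with $g\notin X$ and $X'=\{g\}'$; an attribute $m$ is irreducible if there is no $X\subseteq M$ with $m\notin X$ and $X'=\{m\}'$; a context is reduced if all objects and attributes are irreducible. For $A\subseteq M$ define $A^{\bullet}:=A''\setminus\big(A\cup\bigcup_{n\in A}(A\setminus\{n\})''\big)$; $A$ is a proper premise if $A^{\bullet}\neq\emptyset$. For $m,n\in M$, $m\ge_{\mathbb{K}}n$ iff $\{m\}'\supseteq\{n\}'$. Let $\mathcal{M}(M)$ be the set of attributes whose attribute concept $(\{m\}',\{m\}'')$ is meet-irreducible in the concept lattice, and $\overline{\mathcal{M}(M)}=\{\overline m\mid m\in\mathcal{M}(M)\}$ new elements. The Birkhoff completion is $BC(\mathbb{K}):=\big(G\cup\overline{\mathcal{M}(M)},M,I\cup\{(\overline m,n)\in\overline{\mathcal{M}(M)}\times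 M\mid m\not\ge_{\mathbb{K}}n\}\big)$; ''computed in $BC(\mathbb{K})$'' means using the derivation operators of $BC(\mathbb{K})$ in the definition of $A^{\bullet}$ and of proper premise. *)

From mathcomp Require Import all_boot.
Set Implicit Arguments. Unset Strict Implicit. Unset Printing Implicit Defensive.

Section FCA.
Variables (G M : finType) (I : G -> M -> bool).

Definition ext (B : {set M}) : {set G} := [set g | [forall m in B, I g m]].
Definition intt (A : {set G}) : {set M} := [set m | [forall g in A, I g m]].

Definition obj_irreducible (g : G) : Prop :=
  ~ exists X : {set G}, g \notin X /\ intt X = intt [set g].
Definition attr_irreducible (m : M) : Prop :=
  ~ exists X : {set M}, m \notin X /\ ext X = ext [set m].
Definition reduced : Prop :=
  (forall g, obj_irreducible g) /\ (forall m, attr_irreducible m).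

Definition bullet (A : {set M}) : {set M} :=
  intt (ext A) :\: (A :|: \bigcup_(n in A) intt (ext (A :\ n))).
Definition proper_premise (A : {set M}) : Prop := bullet A != set0.

Definition attr_ge (m n : M) : bool := ext [set n] \subset ext [set m].

Definition is_extent (A : {set G}) : bool := ext (intt A) == A.

(* The attribute concept ({m}', {m}'') is meet-irreducible in the concept
   lattice: it is not the top concept (extent G) and it is not the meet of two
   concepts both different from it (meet of concepts = intersection of extents). *)
Definition meet_irr_attr (m : M) : bool :=
  (ext [set m] != setT) &&
  [forall A1 : {set G}, forall A2 : {set G},
     [&& is_extent A1, is_extent A2 & A1 :&: A2 == ext [set m]] ==>
     ((A1 == ext [set m]) || (A2 == ext [set m]))].

(* Birkhoff completion: new objects  overline m  for m in M(M) *)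
Definition BCobj : finType := (G + {m : M | meet_irr_attr m})%type.
Definition BCinc (x : BCobj) (n : M) : bool :=
  match x with
  | inl g => I g n
  | inr mb => ~~ attr_ge (val mb) n
  end.

End FCA.

From mathcomp Require Import all_boot.

Set Implicit Arguments.
Unset Strict Implicit.
Unset Printing Implicit Defensive.

(* In a reduced context every attribute is irreducible, hence its attribute
   concept is meet-irreducible and the Birkhoff completion adds an object
   [overline n] for every attribute n, carrying exactly the attributes not
   below n.  These objects make the closure of A in BC(K) the union of the
   principal filters {a}'' (a in A), so a set with two distinct elements a, b is never
   a proper premise there: everything in its closure lies in the closure of
   {a} or of {b}.  For a singleton {a} both bullets are {a}'' minus a and the
   closure of the empty set, and the latter is empty in both contexts (in K,
   an attribute shared by all objects would be reducible by the empty set). *)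

Section Derivation.
Variables (G M : finType) (I : G -> M -> bool).

Lemma extP (B : {set M}) g : reflect (forall m, m \in B -> I g m) (g \in ext I B).
Proof. by rewrite inE; apply: forall_inP. Qed.

Lemma inttP (A : {set G}) m : reflect (forall g, g \in A -> I g m) (m \in intt I A).
Proof. by rewrite inE; apply: forall_inP. Qed.

Lemma in_ext1 g a : (g \in ext I [set a]) = I g a.
Proof. by apply/extP/idP => [|Iga m /set1P->//]; apply; rewrite set11. Qed.

Lemma ext0 : ext I set0 = setT.
Proof. by apply/setP => g; rewrite in_setT; apply/extP => m; rewrite in_set0. Qed.

Lemma extU (B C : {set M}) : ext I (B :|: C) = ext I B :&: ext I C.
Proof.
apply/setP => g; rewrite in_setI; apply/extP/andP => [IgBC|[/extP IgB /extP IgC] m].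
- by split; apply/extP => m m_in; apply: IgBC; rewrite in_setU m_in ?orbT.
- by rewrite in_setU => /orP[]; [apply: IgB | apply: IgC].
Qed.

Lemma intt_ext1 a : intt I (ext I [set a]) = [set n | attr_ge I n a].
Proof.
apply/setP => n; rewrite inE /attr_ge.
apply/inttP/subsetP => [Ian g|sub_an g].
- by move=> /Ian; rewrite in_ext1.
- by move=> /sub_an; rewrite in_ext1.
Qed.

Lemma bullet_set1 a :
  bullet I [set a] = intt I (ext I [set a]) :\: ([set a] :|: intt I (ext I set0)).
Proof. by rewrite /bullet big_set1 setDv. Qed.

Lemma intt_ext0 : (forall m, attr_irreducible I m) -> intt I (ext I set0) = set0.
Proof.
move=> irrI; apply/setP => n; rewrite in_set0; apply/negP => /inttP In.
apply: (irrI n); exists set0; split; first by rewrite in_set0.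
by apply/setP => g; rewrite in_ext1 ext0 in_setT In ?ext0 ?in_setT.
Qed.

Lemma attr_irreducible_meet_irr m : attr_irreducible I m -> meet_irr_attr I m.
Proof.
move=> irr_m; apply/andP; split.
  apply: contra_notN irr_m => /eqP ext_m.
  by exists set0; rewrite in_set0 ext0 ext_m.
apply/forallP => A1; apply/forallP => A2.
apply/implyP => /and3P[/eqP ext1 /eqP ext2 /eqP meetA].
have extent_ge (A : {set G}) : ext I [set m] \subset A -> m \in intt I A -> A == ext I [set m].
  move=> sub_mA /inttP Im; rewrite eqEsubset sub_mA andbT.
  by apply/subsetP => g /Im; rewrite in_ext1.
apply/negPn/negP => /norP[ne1 ne2]; apply: irr_m.
exists (intt I A1 :|: intt I A2); rewrite extU ext1 ext2 meetA; split=> //.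
rewrite in_setU negb_or; apply/andP; split.
- by apply: contraNN ne1; apply: extent_ge; rewrite -meetA subsetIl.
- by apply: contraNN ne2; apply: extent_ge; rewrite -meetA subsetIr.
Qed.

End Derivation.

Section BirkhoffCompletion.
Variables (G M : finType) (I : G -> M -> bool).
Hypothesis meet_irrI : forall m, meet_irr_attr I m.
Local Notation BC := (@BCinc G M I).

Lemma intt_ext_BC (A : {set M}) :
  intt BC (ext BC A) = \bigcup_(a in A) intt I (ext I [set a]).
Proof.
apply/setP => n; apply/inttP/bigcupP => [BCn|[a aA]].
- pose nbar : BCobj I := inr (exist _ n (meet_irrI n)).
  have : nbar \notin ext BC A.
    by apply/negP => /BCn; rewrite /BCinc /= /attr_ge subxx.
  rewrite inE => /forall_inPn[a aA]; rewrite negbK => ge_na.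
  by exists a; rewrite // intt_ext1 inE.
- rewrite intt_ext1 inE => ge_na x /extP BCxA; have := BCxA a aA.
  case: x BCxA => [g|[m meet_irr_m]] _ /=.
  + by rewrite -!(in_ext1 I) => /(subsetP ge_na).
  + by apply: contra => ge_mn; apply: subset_trans ge_na ge_mn.
Qed.

Lemma bullet_BC_set1 a : bullet BC [set a] = intt I (ext I [set a]) :\ a.
Proof. by rewrite bullet_set1 !intt_ext_BC big_set0 setU0 big_set1. Qed.

Lemma bullet_BC_card_neq1 (A : {set M}) : #|A| != 1 -> bullet BC A = set0.
Proof.
move=> cardA; apply/eqP; rewrite -subset0; apply/subsetP => n.
rewrite in_setD in_setU => /andP[/norP[_ notin_cl]].
rewrite intt_ext_BC => /bigcupP[a aA ge_na]; case/negP: notin_cl.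
have /card_gt0P[b] : 0 < #|A :\ a|.
  by move: cardA; rewrite (cardsD1 a A) aA add1n; case: #|A :\ a|.
rewrite in_setD1 => /andP[ne_ba bA]; apply/bigcupP; exists b => //.
by rewrite intt_ext_BC; apply/bigcupP; exists a; rewrite // in_setD1 eq_sym ne_ba.
Qed.

End BirkhoffCompletion.

Theorem mainTheorem7 (G M : finType) (I : G -> M -> bool) :
  reduced I ->
  (forall A : {set M}, proper_premise I A -> #|A| = 1 ->
     bullet I A = bullet (@BCinc G M I) A /\
     bullet (@BCinc G M I) A = intt I (ext I A) :\: A) /\
  (forall A : {set M},
     proper_premise (@BCinc G M I) A <-> (proper_premise I A /\ #|A| = 1)).
Proof.
move=> [_ irrI].
have meet_irrI := fun m => attr_irreducible_meet_irr (irrI m).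
have bulletK a : bullet I [set a] = intt I (ext I [set a]) :\ a.
  by rewrite bullet_set1 intt_ext0 // setU0.
have bullets1 a : bullet I [set a] = bullet (@BCinc G M I) [set a].
  by rewrite bulletK bullet_BC_set1.
split=> [A _ /eqP/cards1P[a ->] | A]; first by rewrite bullets1 bullet_BC_set1.
rewrite /proper_premise; have [/eqP/cards1P[a ->]|cardA] := eqVneq #|A| 1.
  by rewrite bullets1 cards1; split=> [|[]].
rewrite bullet_BC_card_neq1 // eqxx; split=> // -[_ cardA1].
by rewrite cardA1 eqxx in cardA.
Qed.
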